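(* For every strategy profile $s$ with $S_0(s)\vee S_1(s)$: if $\mathsf{SAcBes}(s)$ then $\mathsf{SPE}(s)$.
   Context: Let $P=\{A,B\}$ and $\mathrm{Choice}=\{d,r\}$; a payoff function is $f:P\to\mathbb{R}$. Strategy profiles are elements of the final coalgebra of $X\mapsto\mathbb{R}^P+P\times\mathrm{Choice}\times X\times X$ (finite or infinite trees $\langle f\rangle$ or $\langle p,c,s_d,s_r\rangle$, equality being bisimilarity). The payoff $\widehat{s}$ is the partial function given by $\widehat{\langle f\rangle}=f$, $\widehat{\langle p,d,s_d,s_r\rangle}=\widehat{s_d}$, $\widehat{\langle p,r,s_d,s_r\rangle}=\widehat{s_r}$. Convergence $\downarrow$: least predicate with $\downarrow(s)$ iff $s=\langle f\rangle$, or $s=\langle p,d,s_d,s_r\rangle\wedge\downarrow(s_d)$, or $s=\langle p,r,s_d,s_r\rangle\wedge\downarrow(s_r)$. Strong convergence $\Downarrow$: greatest predicate with $\Downarrow(s)$ iff $s=\langle f\rangle$, or $s=\langle p,c,s_d,s_r\rangle$ with $\downarrow(s),\Downarrow(s_d),\Downarrow(s_r)$. For a predicate $\Phi$, $\Box\Phi$ is the greatest predicate such that $\Box\Phi(s)$ iff $\Phi(s)$ and, whenever $s=\langle p,c,s_d,s_r\rangle$, $\Box\Phi(s_d)$ and $\Box\Phi(s_r)$. $\mathsf{PE}(s)$ holds iff $\Downarrow(s)$ and (if $s=\langle p,d,s_d,s_r\rangle$ then $\widehat{s_d}(p)\ge\widehat{s_r}(p)$) and (if $s=\langle p,r,s_d,s_r\rangle$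 then $\widehat{s_r}(p)\ge\widehat{s_d}(p)$); subgame perfect equilibria are $\mathsf{SPE}=\Box\,\mathsf{PE}$. Let $f_{0,1}=(A\mapsto0,B\mapsto1)$, $f_{1,0}=(A\mapsto1,B\mapsto0)$. $S_0,S_1$ are the greatest predicates with $S_0(s)$ iff $s=\langle A,c,\langle f_{0,1}\rangle,s'\rangle$ with $S_1(s')$, and $S_1(s)$ iff $s=\langle B,c,\langle f_{1,0}\rangle,s'\rangle$ with $S_0(s')$. $\mathsf{AcBes}$ is the least predicate such that $\mathsf{AcBes}(s)$ holds iff: whenever $s=\langle p,c,\langle f\rangle,s'\rangle$, then ($p=A$, $f=f_{0,1}$, $c=r$, $\mathsf{AcBes}(s')$) or ($p=B$, $f=f_{1,0}$, and ($c=d$ or $\mathsf{AcBes}(s')$)). $\mathsf{SAcBes}=\Box\,\mathsf{AcBes}$. *)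

From Stdlib Require Import Reals.
Open Scope R_scope.

Inductive Agent : Type := A | B.
Inductive Choice : Type := d | r.

Definition Payoff := Agent -> R.

CoInductive StratProf : Type :=
| Leaf : Payoff -> StratProf
| Node : Agent -> Choice -> StratProf -> StratProf -> StratProf.

(* The partial payoff function  s^ : as a relation  "s^ = f" *)
Inductive PayoffOf : StratProf -> Payoff -> Prop :=
| po_leaf f : PayoffOf (Leaf f) f
| po_d p sd sr f : PayoffOf sd f -> PayoffOf (Node p d sd sr) f
| po_r p sd sr f : PayoffOf sr f -> PayoffOf (Node p r sd sr) f.

Inductive Conv : StratProf -> Prop :=
| conv_leaf f : Conv (Leaf f)
| conv_d p sd sr : Conv sd -> Conv (Node p d sd sr)
| conv_r p sd sr : Conv sr -> Conv (Node p r sd sr).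

CoInductive SConv : StratProf -> Prop :=
| sconv_leaf f : SConv (Leaf f)
| sconv_node p c sd sr :
    Conv (Node p c sd sr) -> SConv sd -> SConv sr -> SConv (Node p c sd sr).

CoInductive Always (Phi : StratProf -> Prop) : StratProf -> Prop :=
| always_leaf f : Phi (Leaf f) -> Always Phi (Leaf f)
| always_node p c sd sr :
    Phi (Node p c sd sr) -> Always Phi sd -> Always Phi sr ->
    Always Phi (Node p c sd sr).

Definition PE (s : StratProf) : Prop :=
  SConv s /\
  (forall p sd sr, s = Node p d sd sr ->
     forall fd fr, PayoffOf sd fd -> PayoffOf sr fr -> fd p >= fr p) /\
  (forall p sd sr, s = Node p r sd sr ->
     forall fd fr, PayoffOf sd fd -> PayoffOf sr fr -> fr p >= fd p).

Definition SPE : StratProf -> Prop := Always PE.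

Definition f01 : Payoff := fun a => match a with A => 0 | B => 1 end.
Definition f10 : Payoff := fun a => match a with A => 1 | B => 0 end.

CoInductive S0 : StratProf -> Prop :=
| s0_intro c s' : S1 s' -> S0 (Node A c (Leaf f01) s')
with S1 : StratProf -> Prop :=
| s1_intro c s' : S0 s' -> S1 (Node B c (Leaf f10) s').

(* AcBes (least predicate): holds vacuously unless s has the shape
   <p,c,<f>,s'>; in that case the listed conditions must hold. *)
Inductive AcBes : StratProf -> Prop :=
| acbes_leaf f : AcBes (Leaf f)
| acbes_node_node p c p' c' s1 s2 s' : AcBes (Node p c (Node p' c' s1 s2) s')
| acbes_A s' : AcBes s' -> AcBes (Node A r (Leaf f01) s')
| acbes_Bd s' : AcBes (Node B d (Leaf f10) s')
| acbes_Br c s' : AcBes s' -> AcBes (Node B c (Leaf f10) s').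

Definition SAcBes : StratProf -> Prop := Always AcBes.

(* Along an escalation profile Alice is forced by AcBes to continue, while the
   least fixed point forces Bob to stop eventually; hence every subgame
   converges, and always to the payoff f10 of Bob's leaves.  Continuing then
   earns Alice 1 against the 0 of stopping, and Bob gets 0 whether he stops or
   continues, so neither has a profitable deviation at any node. *)
From Stdlib Require Import Reals Lra.

Definition Escalation (s : StratProf) : Prop := S0 s \/ S1 s.

Lemma escalation_tail p c f s' :
  Escalation (Node p c (Leaf f) s') -> Escalation s'.
Proof.
  intros [H | H]; inversion H; subst; [right | left]; assumption.
Qed.

Lemma always_now (Phi : StratProf -> Prop) s : Always Phi s -> Phi s.
Proof. now destruct 1. Qed.

Lemma payoff_leaf f g : PayoffOf (Leaf f) g -> g = f.
Proof. now inversion 1. Qed.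

Lemma always_conv_sconv s : Always Conv s -> SConv s.
Proof.
  revert s; cofix CH; intros s H.
  destruct H; constructor; auto.
Qed.

Lemma always_escalation (Phi : StratProf -> Prop) :
  (forall f, Phi (Leaf f)) ->
  (forall s, Escalation s -> SAcBes s -> Phi s) ->
  forall s, Escalation s -> SAcBes s -> Always Phi s.
Proof.
  intros Hleaf Hnode; cofix CH; intros s Hs HA.
  pose proof (Hnode s Hs HA) as Hs_node.
  destruct Hs as [H | H]; inversion H; subst; inversion HA; subst;
    apply always_node; auto using always_leaf;
    apply CH; auto; eapply escalation_tail; [left | right]; eauto.
Qed.

Lemma escalation_conv s : AcBes s -> Escalation s -> Conv s.
Proof.
  induction 1; intros Hs.
  - constructor.
  - destruct Hs as [H | H]; inversion H.
  - apply conv_r, IHAcBes; eapply escalation_tail; eauto.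
  - apply conv_d; constructor.
  - destruct c.
    + apply conv_d; constructor.
    + apply conv_r, IHAcBes; eapply escalation_tail; eauto.
Qed.

Lemma escalation_payoff s f : AcBes s -> Escalation s -> PayoffOf s f -> f = f10.
Proof.
  induction 1; intros Hs Hf.
  - destruct Hs as [H | H]; inversion H.
  - destruct Hs as [H | H]; inversion H.
  - inversion Hf; subst; apply IHAcBes; auto; eapply escalation_tail; eauto.
  - inversion Hf; subst; now apply payoff_leaf.
  - inversion Hf; subst.
    + now apply payoff_leaf.
    + apply IHAcBes; auto; eapply escalation_tail; eauto.
Qed.

Lemma escalation_sconv s : Escalation s -> SAcBes s -> SConv s.
Proof.
  intros Hs HA; apply always_conv_sconv.
  apply (always_escalation Conv); auto using conv_leaf.
  intros t Ht HAt; apply escalation_conv; [apply always_now |]; assumption.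
Qed.

Lemma leaf_pe f : PE (Leaf f).
Proof.
  split; [constructor | split; discriminate].
Qed.

Lemma escalation_continuation_payoff p c f s' fr :
  Escalation (Node p c (Leaf f) s') -> SAcBes (Node p c (Leaf f) s') ->
  PayoffOf s' fr -> fr = f10.
Proof.
  intros Hs HA Hr; inversion HA; subst.
  apply (escalation_payoff s'); eauto using escalation_tail.
  now apply always_now.
Qed.

Lemma acbes_alice_continues c s' : AcBes (Node A c (Leaf f01) s') -> c = r.
Proof. now inversion 1. Qed.

Lemma escalation_pe s : Escalation s -> SAcBes s -> PE s.
Proof.
  intros Hs HA; split; [now apply escalation_sconv |].
  pose proof Hs as [H | H]; inversion H; subst.
  - assert (c = r) as -> by (apply (acbes_alice_continues _ s'), always_now, HA).
    split; intros p sd sr E fd fr Hd Hr; inversion E; subst.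
    apply payoff_leaf in Hd as ->.
    rewrite (escalation_continuation_payoff _ _ _ _ _ Hs HA Hr); simpl; lra.
  - split; intros p sd sr E fd fr Hd Hr; inversion E; subst;
      apply payoff_leaf in Hd as ->;
      rewrite (escalation_continuation_payoff _ _ _ _ _ Hs HA Hr); simpl; lra.
Qed.

Theorem mainTheorem9 (s : StratProf) :
  (S0 s \/ S1 s) -> SAcBes s -> SPE s.
Proof.
  exact (always_escalation PE leaf_pe escalation_pe s).
Qed.
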